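(* Let $G=(V,E)$ be a unit disk graph, $k$ a positive integer, $Y_k=(V,E_Y)$ its Yao graph and $YS_k=(V,E_{YS})$ the output of the Sink step applied to $Y_k$ (defined in the context). Then for each directed edge $\overrightarrow{uv}\in E_Y$ there is a sequence of vertices $w_0=v,w_1,\dots,w_h=u$, all lying in the cone $K_v(u)$, such that for each $i=1,\dots,h$: $\overrightarrow{w_iw_{i-1}}\in E_{YS}$, $w_i\in K_{w_{i-1}}(u)$, and $\mathrm{ID}(\overrightarrow{w_iw_{i-1}})\le \mathrm{ID}(\overrightarrow{uw_{i-1}})$.
   Context: Unit disk graph: $V$ a finite point set in the plane, $E=\{uv:|uv|\le1\}$ with $|uv|$ Euclidean distance. Cones: with $\theta=2\pi/k$, at each point $x$ the plane is partitioned into $k$ half-open half-closed cones with apex $x$ of angle $\theta$, bounded by $k$ equally spaced rays (same directions at every node); $K_x(y)$ is the cone with apex $x$ containing $y$; $K_x$ denotes an arbitrary such cone. Identifiers: nodes have distinct IDs; $\mathrm{ID}(\overrightarrow{xy})=(|xy|,\mathrm{ID}(x),\mathrm{ID}(y))$ compared lexicographically; $\mathrm{ID}(xy)=\min\{\mathrm{ID}(\overrightarrow{xy}),\mathrm{ID}(\overrightarrow{yx})\}$. Yao step: for each node $x$ and each cone $K_x$ containing the other endpoint of some edge of $E$ incident to $x$, add to $E_Y$ the directed edge $\overrightarrow{xy}$ where $xy$ is such an edge with lowest $\mathrm{ID}(xy)$. Sink step on $(V,E_Y)$: set $E_{YS}=\emptyset$. For each node $v$ and each cone $K_v$: let $I$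 be the set of vertices $x$ with $\overrightarrow{xv}\in E_Y$ and $x\in K_v$; set $I(v)\leftarrow I$ and initialize an ordered sequence $J\leftarrow(v)$ and $T(v)\leftarrow\emptyset$. Repeat until $I$ is empty: remove the first vertex $x$ from $J$; for each cone $K_x$ with apex $x$, let $w\in I(x)\cap K_x$ be the node minimizing $\mathrm{ID}(\overrightarrow{wx})$ (if any), add $\overrightarrow{wx}$ to $T(v)$, move $w$ from $I$ to $J$, and set $I(w)\leftarrow I(x)\cap K_x$. Then add all (directed) edges of $T(v)$ to $E_{YS}$. *)

From HB Require Import structures.
From mathcomp Require Import all_boot all_order all_algebra.
From mathcomp Require Import boolp reals trigo.
Set Implicit Arguments. Unset Strict Implicit. Unset Printing Implicit Defensive.
Import Order.TTheory GRing.Theory Num.Theory.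
Local Open Scope ring_scope.

Definition dist (R : realType) (a b : R * R) : R :=
  Num.sqrt ((a.1 - b.1) ^+ 2 + (a.2 - b.2) ^+ 2).

(* Cone number j (0 <= j < k) with apex a: the rays are at angles
   alpha + j * (2 pi / k); cone j is the half-open angular sector
   [alpha + j*theta, alpha + (j+1)*theta).  The apex itself belongs to no cone. *)
Definition in_cone (R : realType) (alpha : R) (k : nat) (a : R * R) (j : nat)
  (b : R * R) : bool :=
  `[< exists r phi : R, 0 < r /\
       alpha + j%:R * (2 * pi / k%:R) <= phi /\
       phi < alpha + j.+1%:R * (2 * pi / k%:R) /\
       b = (a.1 + r * cos phi, a.2 + r * sin phi) >].

(* same_cone a b c  <=>  c lies in K_a(b), the cone with apex a containing b. *)
Definition same_cone (R : realType) (alpha : R) (k : nat) (a b c : R * R) : bool :=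
  [exists j : 'I_k, in_cone alpha k a j b && in_cone alpha k a j c].

Definition lexle (R : realType) (x y : R * nat * nat) : bool :=
  (x.1.1 < y.1.1) ||
  ((x.1.1 == y.1.1) && ((x.1.2 < y.1.2)%N || ((x.1.2 == y.1.2) && (x.2 <= y.2)%N))).

Definition dID (R : realType) (T : finType) (p : T -> R * R) (id : T -> nat)
  (x y : T) : R * nat * nat := (dist (p x) (p y), id x, id y).

Definition uID (R : realType) (T : finType) (p : T -> R * R) (id : T -> nat)
  (x y : T) : R * nat * nat :=
  if lexle (dID p id x y) (dID p id y x) then dID p id x y else dID p id y x.

Definition udg_edge (R : realType) (T : finType) (p : T -> R * R) (x y : T) : bool :=
  (x != y) && (dist (p x) (p y) <= 1).

Definition yao_edge (R : realType) (T : finType) (p : T -> R * R) (id : T -> nat)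
  (alpha : R) (k : nat) (x y : T) : bool :=
  udg_edge p x y &&
  [forall y', (udg_edge p x y' && same_cone alpha k (p x) (p y) (p y'))
                ==> lexle (uID p id x y) (uID p id x y')].

(* State of one run of the Sink step for a fixed node v and cone:
   the set I, the sequence J, the map z |-> I(z), and the edge set T(v)
   (directed edge w -> x stored as the pair (w, x)). *)
Record sink_state (T : finType) := SinkState {
  ss_I : {set T};
  ss_J : seq T;
  ss_Imap : T -> {set T};
  ss_T : {set T * T}
}.

Definition sink_cone (R : realType) (T : finType) (p : T -> R * R) (id : T -> nat)
  (alpha : R) (k : nat) (x : T) (st : sink_state T) (j : 'I_k) : sink_state T :=
  let S := ss_Imap st x :&: [set w | in_cone alpha k (p x) j (p w)] in
  match [pick w in S | [forall w' in S, lexle (dID p id w x) (dID p id w' x)]] with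
  | Some w => SinkState (ss_I st :\ w) (rcons (ss_J st) w)
                 (fun z => if z == w then S else ss_Imap st z)
                 ((w, x) |: ss_T st)
  | None => st
  end.

(* One iteration of the "repeat until I is empty" loop (identity once I is
   empty, or if J happens to be empty). Cones are handled in index order. *)
Definition sink_iter (R : realType) (T : finType) (p : T -> R * R) (id : T -> nat)
  (alpha : R) (k : nat) (st : sink_state T) : sink_state T :=
  if ss_I st == set0 then st else
  match ss_J st with
  | [::] => st
  | x :: J' => foldl (sink_cone p id alpha x)
                 (SinkState (ss_I st) J' (ss_Imap st) (ss_T st)) (enum 'I_k)
  end.

Definition sink_init (R : realType) (T : finType) (p : T -> R * R) (id : T -> nat)
  (alpha : R) (k : nat) (v : T) (j : 'I_k) : sink_state T :=
  let I0 := [set x | yao_edge p id alpha k x v && in_cone alpha k (p v) j (p x)] in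
  SinkState I0 [:: v] (fun z => if z == v then I0 else set0) set0.

(* Each iteration pops one element of J, and each
   push into J removes an element from I, so the loop stops after at most
   #|T|.+1 iterations; sink_iter is stationary afterwards. *)
Definition sink_T (R : realType) (T : finType) (p : T -> R * R) (id : T -> nat)
  (alpha : R) (k : nat) (v : T) (j : 'I_k) : {set T * T} :=
  ss_T (iter #|T|.+1 (sink_iter p id alpha k) (sink_init p id alpha v j)).

Definition sink_edge (R : realType) (T : finType) (p : T -> R * R) (id : T -> nat)
  (alpha : R) (k : nat) (x y : T) : bool :=
  [exists v, exists j : 'I_k, (x, y) \in sink_T p id alpha v j].

(* Let j0 be the cone of v containing u and run the Sink step for v and j0.
   Throughout the run, every y in I(z) is joined to z by a path v = w_0, ..., w_h = z
   of edges of T(v) that satisfies the conditions of the theorem with respect to y: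
   when w is chosen in the cone K_x(j), appending w to the path to x works for every
   y in I(x) ∩ K_x(j), because w minimises ID(w -> x) there.  A node leaves I only when
   it is chosen, and it then lies in its own set I(w), so it suffices that u leaves I.
   This holds because the loop empties I within the allotted #|T|+1 iterations: the
   sets I(y) \ {y} of the queued nodes y partition I (the cones at a node partition
   the plane minus the node), so J is nonempty while I is, and #|I| + |J| decreases by
   one at each iteration. *)

From Pilot Require Import Defs.
From HB Require Import structures.
From mathcomp Require Import all_boot all_order all_algebra.
From mathcomp Require Import boolp reals trigo.
From mathcomp Require Import lra zify.
Import Order.TTheory GRing.Theory Num.Theory.
Local Open Scope ring_scope.

Lemma periodicz {U V : zmodType} {f : U -> V} {T : U} : periodic f T ->
  forall (z : int) a, f (a + T *~ z) = f a.
Proof.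
move=> fT [] n a; first exact: periodicn.
by rewrite NegzE mulrNz -[in RHS](subrK (T *+ n.+1) a) periodicn.
Qed.

Section Cones.
Context {R : realType}.

Lemma cos_eq1_0 (d : R) : 0 <= d < pi *+ 2 -> cos d = 1 -> d = 0.
Proof.
move=> /andP [d_ge0 d_lt2pi] cosd.
have pi_gt0 := pi_gt0 R.
have in0pi (x : R) : 0 <= x <= pi -> x \in `[0, pi] by rewrite in_itv.
have [d_lepi | pi_ltd] := lerP d pi.
  by apply: cos_inj; rewrite ?in0pi ?d_ge0 ?lexx ?(ltW pi_gt0) // cosd cos0.
have : pi *+ 2 - d = 0.
  apply: cos_inj; rewrite ?in0pi ?lexx ?(ltW pi_gt0) //; last first.
    by rewrite cosB cos2pi sin2pi mul0r addr0 mul1r cosd cos0.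
  by apply/andP; split; lra.
lra.
Qed.

Lemma cos_sin_inj (a x y : R) : a <= x < a + pi *+ 2 -> a <= y < a + pi *+ 2 ->
  cos x = cos y -> sin x = sin y -> x = y.
Proof.
wlog yx : x y / y <= x.
  move=> wlog_xy hx hy cxy sxy; have [le_yx | lt_xy] := lerP y x; first exact: wlog_xy.
  by apply/esym/wlog_xy => //; apply: ltW.
move=> /andP [ax xa] /andP [ay ya] cxy sxy.
suff : x - y = 0 by lra.
apply: cos_eq1_0; last by rewrite cosB -cxy -sxy cos2Dsin2.
by apply/andP; split; lra.
Qed.

Context {alpha : R} {k : nat}.

Local Notation theta := (2 * pi / k%:R : R).

Lemma cone_angle_gt0 : (0 < k)%N -> 0 < theta.
Proof. by move=> k_gt0; rewrite divr_gt0 ?ltr0n // mulr_gt0 // pi_gt0. Qed.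

Lemma natr_mul_cone_angle : (0 < k)%N -> k%:R * theta = pi *+ 2.
Proof.
by move=> k_gt0; rewrite mulrCA mulfV ?pnatr_eq0 -?lt0n //; lra.
Qed.

Lemma apex_notin_cone (a : R * R) j : ~~ in_cone alpha k a j a.
Proof.
apply/negP => /asboolP [r [phi [r_gt0 [_ [_ ar]]]]].
have rcos : r * cos phi = 0 by apply: (addrI a.1); rewrite addr0 [in RHS]ar.
have rsin : r * sin phi = 0 by apply: (addrI a.2); rewrite addr0 [in RHS]ar.
have r_neq0 : r != 0 by rewrite gt_eqF.
move/eqP: rcos; rewrite mulf_eq0 (negbTE r_neq0) => /eqP cos0.
move/eqP: rsin; rewrite mulf_eq0 (negbTE r_neq0) => /eqP sin0.
by have := cos2Dsin2 phi; rewrite cos0 sin0 expr0n addr0 => /eqP; rewrite eq_sym oner_eq0.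
Qed.

Lemma in_cone_uniq {a b : R * R} {j j' : 'I_k} :
  in_cone alpha k a j b -> in_cone alpha k a j' b -> j = j'.
Proof.
have k_gt0 : (0 < k)%N by apply: leq_ltn_trans (ltn_ord j).
move=> /asboolP [r [x [r_gt0 [x_ge [x_lt bx]]]]] /asboolP [r' [y [r'_gt0 [y_ge [y_lt by_]]]]].
rewrite {}bx in by_.
have rcos : r * cos x = r' * cos y by apply: (addrI a.1); have := congr1 fst by_.
have rsin : r * sin x = r' * sin y by apply: (addrI a.2); have := congr1 snd by_.
have rr' : r = r'.
  have : r ^+ 2 = r' ^+ 2.
    rewrite -[r ^+ 2]mulr1 -(cos2Dsin2 x) -[r' ^+ 2]mulr1 -(cos2Dsin2 y).
    by rewrite !mulrDr -!exprMn rcos rsin.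
  by move/eqP; rewrite eqrXn2 ?ltW // => /eqP.
subst r'; have r_neq0 : r != 0 by rewrite gt_eqF.
have th_gt0 := cone_angle_gt0 k_gt0.
have lower (i : 'I_k) : 0 <= i%:R * theta by rewrite mulr_ge0 ?ler0n ?ltW.
have upper (i : 'I_k) : i.+1%:R * theta <= pi *+ 2.
  by rewrite -(natr_mul_cone_angle k_gt0) ler_pM2r // ler_nat.
have xy : x = y.
  apply: (@cos_sin_inj alpha); try exact: (mulfI r_neq0).
    by have := lower j; have := upper j; move=> *; apply/andP; split; lra.
  by have := lower j'; have := upper j'; move=> *; apply/andP; split; lra.
subst y; apply: val_inj => /=.
have mono (i i' : nat) : (i < i')%N -> i.+1%:R * theta <= i'%:R * theta.
  by move=> ii'; rewrite ler_pM2r // ler_nat.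
by case: (ltngtP j j') => // /mono ? ; exfalso; lra.
Qed.

Lemma polar_coords {a b : R * R} : a != b ->
  exists r phi : R, 0 < r /\ b = (a.1 + r * cos phi, a.2 + r * sin phi).
Proof.
case: a b => [a1 a2] [b1 b2] ab /=.
set dx := b1 - a1; set dy := b2 - a2.
have d_gt0 : 0 < dx ^+ 2 + dy ^+ 2.
  rewrite lt_def addr_ge0 ?sqr_ge0 // andbT paddr_eq0 ?sqr_ge0 //.
  by rewrite !sqrf_eq0 !subr_eq0; apply: contra ab => /andP [/eqP -> /eqP ->].
set r := Num.sqrt (dx ^+ 2 + dy ^+ 2).
have r_gt0 : 0 < r by rewrite sqrtr_gt0.
have r2 : r ^+ 2 = dx ^+ 2 + dy ^+ 2 by rewrite sqr_sqrtr // ltW.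
have r_neq0 : r != 0 by rewrite gt_eqF.
set c := dx / r.
have c2_le1 : c ^+ 2 <= 1.
  by rewrite expr_div_n ler_pdivrMr ?exprn_gt0 // mul1r r2 lerDl sqr_ge0.
have c_itv : -1 <= c <= 1.
  by rewrite -ler_norml -(expr_le1 (n:=2)) // real_normK ?num_real.
have r_sin_acos : r * sin (acos c) = `|dy|.
  rewrite sin_acos //; apply/eqP.
  rewrite -(eqrXn2 (n:=2)) ?normr_ge0 ?mulr_ge0 ?sqrtr_ge0 ?(ltW r_gt0) //.
  rewrite exprMn r2 sqr_sqrtr ?subr_ge0 // real_normK ?num_real //.
  rewrite /c expr_div_n mulrBr mulr1 -r2 mulrCA mulfV ?expf_neq0 // mulr1 r2.
  by rewrite addrC addKr.
pose phi := if 0 <= dy then acos c else - acos c.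
have cos_phi : cos phi = c by rewrite /phi; case: ifP; rewrite ?cosN acosK // in_itv.
have r_sin_phi : r * sin phi = dy.
  rewrite /phi; case: ifP => dy_ge0; rewrite ?sinN ?mulrN r_sin_acos.
    by rewrite ger0_norm.
  by rewrite ltr0_norm ?opprK // ltNge dy_ge0.
exists r, phi; split => //.
by rewrite r_sin_phi cos_phi /c mulrCA mulfV // mulr1 /dx /dy !subrKC.
Qed.

Lemma in_cone_exists {a b : R * R} : (0 < k)%N -> a != b ->
  exists j : 'I_k, in_cone alpha k a j b.
Proof.
move=> k_gt0 ab; have [r [phi0 [r_gt0 bE]]] := polar_coords ab.
have twopi_gt0 : 0 < pi *+ 2 :> R by rewrite pmulrn_lgt0 // pi_gt0.
set n := Num.floor ((phi0 - alpha) / (pi *+ 2)).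
set phi := phi0 + pi *+ 2 *~ - n.
have /andP [phi_ge phi_lt] : alpha <= phi < alpha + pi *+ 2.
  have /andP [n_le n_gt] := floor_itv ((phi0 - alpha) / (pi *+ 2)).
  rewrite -/n ler_pdivlMr // in n_le; rewrite -/n intrD ltr_pdivrMr // in n_gt.
  by rewrite /phi mulrNz -mulrzl; apply/andP; split; lra.
have th_gt0 := cone_angle_gt0 k_gt0.
have kth := natr_mul_cone_angle k_gt0.
set y := (phi - alpha) / theta.
have y_ge0 : 0 <= y by apply: divr_ge0; [lra | exact: ltW].
have /andP [j_le j_gt] := truncn_itv y_ge0.
have j_lt : (Num.truncn y < k)%N by rewrite truncn_lt_nat // ltr_pdivrMr // kth; lra.
exists (Ordinal j_lt); apply/asboolP; exists r, phi; split => //=.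
rewrite ler_pdivlMr // in j_le; rewrite ltr_pdivrMr // in j_gt.
do 2?[split; first lra].
by rewrite bE /phi (periodicz (@cosD2pi R)) (periodicz (@sinD2pi R)).
Qed.

End Cones.

Definition lexkey {R : realType} (x : R * nat * nat) : (R *l nat) *l nat := x.

Lemma lexleE {R : realType} (x y : R * nat * nat) : lexle x y = (lexkey x <= lexkey y)%O.
Proof.
case: x y => [[a b] c] [[a' b'] c'].
rewrite /lexle /lexkey !lexi_pair /=.
by case: (ltgtP a a') => //= _; rewrite !leEnat; case: (ltngtP b b').
Qed.

Section SinkStep.
Context {R : realType} {T : finType}.
Variables (p : T -> R * R) (id : T -> nat) (alpha : R) (k : nat).

Local Notation cone x j y := (in_cone alpha k (p x) j (p y)).
Local Notation sink_cone := (@sink_cone R T p id alpha k).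
Local Notation sink_iter := (sink_iter p id alpha k).

Definition cone_set (st : sink_state T) x (j : 'I_k) :=
  ss_Imap st x :&: [set w | cone x j w].

Variant sink_cone_spec x st j : sink_state T -> Prop :=
  | SinkConeAdd w of w \in cone_set st x j
      & (forall w', w' \in cone_set st x j -> lexle (dID p id w x) (dID p id w' x)) :
    sink_cone_spec x st j (SinkState (ss_I st :\ w) (rcons (ss_J st) w)
      (fun z => if z == w then cone_set st x j else ss_Imap st z) ((w, x) |: ss_T st))
  | SinkConeSkip of cone_set st x j = set0 : sink_cone_spec x st j st.

Lemma sink_coneP x st j : sink_cone_spec x st j (sink_cone x st j).
Proof.
rewrite /Defs.sink_cone -/(cone_set st x j).
case: pickP => [w /andP [wS /forallP wmin] | no_min].
  by apply: SinkConeAdd => // w' w'S; have := wmin w'; rewrite w'S.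
apply: SinkConeSkip; apply/setP => z; rewrite in_set0; apply/negP => zS.
pose key w := lexkey (dID p id w x).
case: (arg_minP key zS) => w wS wmin.
case/negbT/nandP: (no_min w) => [/negP[] // | /forall_inPn [w' w'S]].
by rewrite lexleE wmin.
Qed.

Lemma sink_iter_ind (P : sink_state T -> Prop) :
  (forall x st j, P st -> P (sink_cone x st j)) ->
  (forall st J, P st -> P (SinkState (ss_I st) J (ss_Imap st) (ss_T st))) ->
  forall st, P st -> P (sink_iter st).
Proof.
move=> Pcone Ppop st Pst; rewrite /Defs.sink_iter; case: ifP => // _.
case: (ss_J st) => // x J.
elim: (enum 'I_k) (SinkState _ _ _ _) (Ppop st J Pst) => //= j js IH st' Pst'.
exact/IH/Pcone.
Qed.

Lemma iter_sink_ind (P : sink_state T -> Prop) :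
  (forall x st j, P st -> P (sink_cone x st j)) ->
  (forall st J, P st -> P (SinkState (ss_I st) J (ss_Imap st) (ss_T st))) ->
  forall n st, P st -> P (iter n sink_iter st).
Proof. by move=> Pcone Ppop; elim=> //= n IH st /IH; apply: sink_iter_ind. Qed.

Variables (v : T) (j0 : 'I_k).

Definition cone_in_edges := [set x | yao_edge p id alpha k x v && cone v j0 x].

Definition sink_path (u : T) (E : {set T * T}) (s : seq T) :=
  forall i, (0 < i <= size s)%N -> let w := nth v (v :: s) in
    [/\ same_cone alpha k (p v) (p u) (p (w i)), (w i, w i.-1) \in E,
        same_cone alpha k (p (w i.-1)) (p u) (p (w i)) &
        lexle (dID p id (w i) (w i.-1)) (dID p id u (w i.-1))].

Lemma sink_path_subset u (E E' : {set T * T}) s :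
  E \subset E' -> sink_path u E s -> sink_path u E' s.
Proof. by move=> EE' path_s i /path_s [? /(subsetP EE') ? ? ?]. Qed.

Lemma sink_path_rcons u E s w : sink_path u E s ->
  same_cone alpha k (p v) (p u) (p w) -> (w, last v s) \in E ->
  same_cone alpha k (p (last v s)) (p u) (p w) ->
  lexle (dID p id w (last v s)) (dID p id u (last v s)) ->
  sink_path u E (rcons s w).
Proof.
move=> path_s vuw wE suw lex_w i; rewrite size_rcons => /andP [i_gt0 i_le] /=.
rewrite -rcons_cons !nth_rcons /=.
have [i_lt | i_gt | ->] := ltngtP i (size s).+1.
- by have := path_s i; rewrite i_gt0 -ltnS i_lt (leq_ltn_trans (leq_pred i) i_lt) /=; apply.
- by move: i_le; rewrite leqNgt i_gt.
- by rewrite ltnSn /= -[size s]/((size (v :: s)).-1) nth_last.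
Qed.

Definition paths_inv (st : sink_state T) := forall z y, y \in ss_Imap st z ->
  y \in cone_in_edges /\ exists2 s, last v s = z & sink_path y (ss_T st) s.

Definition removed_inv (st : sink_state T) := forall y, y \in cone_in_edges ->
  y \notin ss_I st -> y \in ss_Imap st y.

Lemma paths_inv_cone x st j : paths_inv st -> paths_inv (sink_cone x st j).
Proof.
move=> paths_st; case: sink_coneP => // w wS wmin z y /=.
have subT : ss_T st \subset (w, x) |: ss_T st by apply: subsetUr.
case: eqP => [-> yS | _ /paths_st [yI [s s_z path_s]]]; last first.
  by split => //; exists s => //; apply: sink_path_subset path_s.
have /setIP [yx /[!inE] xjy] := yS; have /setIP [wx /[!inE] xjw] := wS.
have [yI [s s_x path_s]] := paths_st _ _ yx; have [wI _] := paths_st _ _ wx.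
split; first by rewrite inE in yI.
exists (rcons s w); first by rewrite last_rcons.
move: yI wI; rewrite !inE => /andP [_ vjy] /andP [_ vjw].
apply: sink_path_rcons; rewrite ?s_x ?setU11 ?wmin //.
- exact: sink_path_subset path_s.
- by apply/existsP; exists j0; rewrite vjy vjw.
- by apply/existsP; exists j; rewrite xjy xjw.
Qed.

Lemma removed_inv_cone x st j : removed_inv st -> removed_inv (sink_cone x st j).
Proof.
move=> removed_st; case: sink_coneP => // w wS _ y yI /=.
by rewrite in_setD1 negb_and negbK; case: eqP => [-> | _ /(removed_st _ yI)].
Qed.

Hypotheses (p_inj : injective p) (k_gt0 : (0 < k)%N).

Definition pending (st : sink_state T) y := ss_Imap st y :\ y.

Definition measure (st : sink_state T) := (#|ss_I st| + size (ss_J st))%N.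

(* [P] is the part of I(x) lying in the cones of the current node x that are still
   to be processed. *)
Record cover_inv (st : sink_state T) (P : {set T}) : Prop := CoverInv {
  cover_uniq : uniq (ss_J st);
  cover_queue : forall y, y \in ss_J st -> y \notin ss_I st;
  cover_pending : forall y, y \in ss_J st -> pending st y \subset ss_I st;
  cover_extra : P \subset ss_I st;
  cover_all : forall z, z \in ss_I st ->
    (z \in P) || has (fun y => z \in pending st y) (ss_J st);
  cover_disj : forall y1 y2 z, y1 \in ss_J st -> y2 \in ss_J st ->
    z \in pending st y1 -> z \in pending st y2 -> y1 = y2;
  cover_extra_disj : forall y z, y \in ss_J st -> z \in pending st y -> z \notin P }.

Definition cones_left (st : sink_state T) x (js : seq 'I_k) :=
  [set z in ss_Imap st x | has (fun j : 'I_k => cone x j z) js].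

Lemma cones_left_cons st x j js :
  cones_left st x (j :: js) = cone_set st x j :|: cones_left st x js.
Proof. by apply/setP => z; rewrite !inE /= andb_orr. Qed.

Lemma cones_left_enum st x : cones_left st x (enum 'I_k) = pending st x.
Proof.
apply/setP => z; rewrite !inE andbC; congr (_ && _).
have [-> | zx] := eqVneq z x.
  by apply/negbTE/hasPn => j _; apply: apex_notin_cone.
have xz : p x != p z by rewrite (inj_eq p_inj) eq_sym.
have [j xjz] := in_cone_exists (alpha:=alpha) k_gt0 xz.
by apply/hasP; exists j; rewrite ?mem_enum.
Qed.

Lemma apex_notin_cone_set st x j : x \notin cone_set st x j.
Proof. by rewrite !inE (negbTE (apex_notin_cone _ _)) andbF. Qed.

Lemma cone_set_notin_cones_left st x j js z : j \notin js ->
  z \in cone_set st x j -> z \notin cones_left st x js.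
Proof.
move=> j_js; rewrite !inE => /andP [_ xjz]; apply/negP => /andP [_ /hasP [j' j'js xj'z]].
by move: j_js; rewrite -(in_cone_uniq xj'z xjz) j'js.
Qed.

Lemma cover_inv_add {x j js st w} : uniq (j :: js) -> x \notin ss_J st ->
  cover_inv st (cones_left st x (j :: js)) -> w \in cone_set st x j ->
  let st' := SinkState (ss_I st :\ w) (rcons (ss_J st) w)
    (fun z => if z == w then cone_set st x j else ss_Imap st z) ((w, x) |: ss_T st) in
  [/\ x \notin ss_J st', cover_inv st' (cones_left st' x js) & measure st' = measure st].
Proof.
move=> /andP [j_js _] xJ [uJ JI pendI restI cover disj rest_disj] wS st'.
set S := cone_set st x j; set L := cones_left st x js.
have restE : cones_left st x (j :: js) = S :|: L by apply: cones_left_cons.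
have SL z : z \in S -> z \notin L by apply: cone_set_notin_cones_left.
have wI : w \in ss_I st by rewrite (subsetP restI) // restE inE wS.
have wJ : w \notin ss_J st by apply: contraL wI; apply: JI.
have wx : w != x by apply: contraTneq wS => ->; apply: apex_notin_cone_set.
have pendJ y : y \in ss_J st -> pending st' y = pending st y.
  by move=> yJ; rewrite /pending /=; case: eqP => // yw; rewrite -yw yJ in wJ.
have pendw : pending st' w = S :\ w by rewrite /pending /= eqxx.
have leftE : cones_left st' x js = L by rewrite /cones_left /= eq_sym (negbTE wx).
have S_rest z : z \in S -> z \in cones_left st x (j :: js) by rewrite restE in_setU => ->.
have L_rest z : z \in L -> z \in cones_left st x (j :: js) by rewrite restE in_setU orbC => ->.
split; rewrite ?leftE //=.
- by rewrite mem_rcons in_cons negb_or eq_sym wx.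
- split => /=.
  + by rewrite rcons_uniq wJ.
  + by move=> y; rewrite mem_rcons in_cons in_setD1 => /orP [/eqP -> | /JI /negbTE ->];
      rewrite ?eqxx ?andbF.
  + move=> y; rewrite mem_rcons in_cons => /orP [/eqP -> | yJ].
      by rewrite pendw setSD // (subset_trans _ restI) // restE subsetUl.
    rewrite pendJ //; apply/subsetP => z zy; rewrite in_setD1 (subsetP (pendI y yJ)) //.
    by rewrite andbT; apply: contraNneq (rest_disj _ _ yJ zy) => ->; apply: S_rest.
  + apply/subsetP => z zL; rewrite in_setD1 (subsetP restI) ?L_rest // andbT.
    by apply: contraTneq zL => ->; apply: SL.
  + move=> z /setD1P [zw zI]; rewrite has_rcons pendw in_setD1 zw /=.
    case/orP: (cover z zI); first by rewrite restE in_setU => /orP [-> | ->]; rewrite ?orbT.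
    by case/hasP => y yJ zy; apply/or3P/Or33/hasP; exists y; rewrite ?pendJ.
  + have pend_wJ y z : y \in ss_J st -> z \in pending st' w -> z \notin pending st' y.
      move=> yJ; rewrite pendw pendJ // => /setD1P [_ /S_rest].
      by apply: contraL => /(rest_disj _ _ yJ).
    move=> y1 y2 z; rewrite !mem_rcons !in_cons.
    case/orP => [/eqP -> | y1J]; case/orP => [/eqP -> | y2J] // z1 z2.
    * by have := pend_wJ _ _ y2J z1; rewrite z2.
    * by have := pend_wJ _ _ y1J z2; rewrite z1.
    * by rewrite !pendJ // in z1 z2; apply: disj z1 z2.
  + move=> y z; rewrite mem_rcons in_cons => /orP [/eqP -> | yJ].
      by rewrite pendw => /setD1P [_ /SL].
    by rewrite pendJ // => /(rest_disj _ _ yJ); apply: contra => /L_rest.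
- by rewrite /measure /= size_rcons (cardsD1 w (ss_I st)) wI addSnnS.
Qed.

Lemma cover_inv_cone {x j js st} : uniq (j :: js) -> x \notin ss_J st ->
  cover_inv st (cones_left st x (j :: js)) ->
  let st' := sink_cone x st j in
  [/\ x \notin ss_J st', cover_inv st' (cones_left st' x js) & measure st' = measure st].
Proof.
move=> ujs xJ inv; case: sink_coneP => [w wS _ | S0]; first exact: cover_inv_add.
by split => //; rewrite -[cones_left st x js]set0U -S0 -cones_left_cons.
Qed.

Lemma cover_inv_fold {x js st} : cover_inv st (cones_left st x js) ->
  uniq js -> x \notin ss_J st ->
  let st' := foldl (sink_cone x) st js in
  cover_inv st' set0 /\ measure st' = measure st.
Proof.
elim: js st => [|j js IH] st inv ujs xJ /=.
  by split => //; move: inv; congr cover_inv; apply/setP => z; rewrite !inE andbF.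
have [xJ' inv' <-] := cover_inv_cone ujs xJ inv.
by apply: IH => //; case/andP: ujs.
Qed.

Lemma cover_inv_pop {st x J} : cover_inv st set0 -> ss_J st = x :: J ->
  let st' := SinkState (ss_I st) J (ss_Imap st) (ss_T st) in
  x \notin J /\ cover_inv st' (cones_left st' x (enum 'I_k)).
Proof.
move=> [+ JI pendI _ cover disj _] EJ st'; rewrite EJ cones_left_enum /= => /andP [xJ uJ].
have xxJ : x \in ss_J st by rewrite EJ mem_head.
have JJ y : y \in J -> y \in ss_J st by rewrite EJ in_cons orbC => ->.
split => //; split => //=.
- by move=> y /JJ /JI.
- by move=> y /JJ /pendI.
- exact: pendI.
- by move=> z /cover; rewrite EJ in_set0.
- by move=> y1 y2 z /JJ y1J /JJ y2J; apply: disj.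
- move=> y z yJ zy; apply/negP => zx.
  by rewrite (disj _ _ _ xxJ (JJ _ yJ) zx zy) yJ in xJ.
Qed.

Lemma cover_inv_iter {st} : cover_inv st set0 -> ss_I st != set0 ->
  cover_inv (sink_iter st) set0 /\ (measure (sink_iter st)).+1 = measure st.
Proof.
move=> inv In; have [z zI] := set0Pn _ In; rewrite /Defs.sink_iter (negbTE In).
case EJ : (ss_J st) => [|x J].
  by have := cover_all _ _ inv _ zI; rewrite EJ in_set0.
have [xJ inv'] := cover_inv_pop inv EJ.
have [inv'' ->] := cover_inv_fold inv' (enum_uniq _) xJ.
by rewrite /measure /= EJ addnS.
Qed.

Definition sink_start := sink_init p id alpha v j0.

Lemma cover_inv_start : cover_inv sink_start set0.
Proof.
have vI : v \notin cone_in_edges by rewrite inE /yao_edge /udg_edge eqxx.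
split => //=; rewrite -/cone_in_edges ?sub0set //.
- by move=> y; rewrite mem_seq1 => /eqP ->.
- by move=> y; rewrite mem_seq1 => /eqP ->; rewrite /pending /= eqxx subD1set.
- move=> z zI; rewrite in_set0 /pending /= eqxx in_setD1 zI andbT.
  by rewrite orbF; apply: contraNneq vI => <-.
- by move=> y1 y2 z; rewrite !mem_seq1 => /eqP -> /eqP ->.
- by move=> *; rewrite in_set0.
Qed.

Lemma sink_terminates : ss_I (iter #|T|.+1 sink_iter sink_start) = set0.
Proof.
pose st n := iter n sink_iter sink_start.
have inv n : cover_inv (st n) set0 /\
    (ss_I (st n) != set0 -> measure (st n) + n = measure sink_start)%N.
  elim: n => [|n [inv_n meas_n]]; first by split; [apply: cover_inv_start | rewrite addn0].
  rewrite /st /=; have [I_empty | In] := eqVneq (ss_I (st n)) set0.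
    by rewrite /Defs.sink_iter I_empty eqxx; split => //; rewrite I_empty eqxx.
  have [inv' meas'] := cover_inv_iter inv_n In.
  by split => // _; rewrite -(meas_n In) -meas' addnS.
apply/eqP; apply: contraT => In; have [_ /(_ In)] := inv #|T|.+1.
have : (0 < #|ss_I (st #|T|.+1)|)%N by rewrite card_gt0.
have : (measure sink_start <= #|T|.+1)%N by rewrite /measure /= addn1 ltnS max_card.
rewrite /measure; lia.
Qed.

Lemma sink_path_exists u : u \in cone_in_edges ->
  exists2 s, last v s = u & sink_path u (sink_T p id alpha v j0) s.
Proof.
move=> uI; set st := iter #|T|.+1 sink_iter sink_start.
have paths_st : paths_inv st.
  apply: (@iter_sink_ind paths_inv) => [x st' j | st' J |]; first exact: paths_inv_cone.
    by [].
  move=> z y /=; case: eqP => [-> yI | _]; last by rewrite in_set0.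
  by split => //; exists [::] => // -[].
have removed_st : removed_inv st.
  apply: (@iter_sink_ind removed_inv) => [x st' j | st' J |]; first exact: removed_inv_cone.
    by [].
  by move=> y yI; rewrite /= -/cone_in_edges yI.
have u_done : u \notin ss_I st by rewrite sink_terminates in_set0.
by have [_] := paths_st u u (removed_st u uI u_done).
Qed.

End SinkStep.

Theorem lemma2 (R : realType) (T : finType) (p : T -> R * R) (id : T -> nat)
  (alpha : R) (k : nat) :
  injective p -> injective id -> (0 < k)%N ->
  forall u v : T, yao_edge p id alpha k u v ->
  exists s : seq T, last v s = u /\
    forall i : nat, (0 < i <= size s)%N ->
      let w := nth v (v :: s) in
      [/\ same_cone alpha k (p v) (p u) (p (w i)),
          sink_edge p id alpha k (w i) (w i.-1),
          same_cone alpha k (p (w i.-1)) (p u) (p (w i)) &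
          lexle (dID p id (w i) (w i.-1)) (dID p id u (w i.-1))].
Proof.
move=> p_inj _ k_gt0 u v uv.
have vu : p v != p u.
  by rewrite (inj_eq p_inj); apply: contraTneq uv => ->; rewrite /yao_edge /udg_edge eqxx.
have [j0 vj0u] := in_cone_exists (alpha:=alpha) k_gt0 vu.
have uI : u \in cone_in_edges p id alpha k v j0 by rewrite inE uv vj0u.
have [s s_u path_s] := sink_path_exists p id alpha k v j0 p_inj k_gt0 u uI.
exists s; split => // i /path_s [vuw edge xuw lex_w]; split => //.
by apply/existsP; exists v; apply/existsP; exists j0.
Qed.
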